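(* Let $X$ be a digraph and $\Delta$ the largest vertex degree of $\Gamma(X)$. Then $\rho(H_k(X))\le\Delta$ for all $k\in\mathbb{N}$. Furthermore, if $X$ is weakly connected, then $\rho(H_k(X))=\Delta$ if and only if $\Gamma(X)$ is $\Delta$-regular and, with $\theta=\frac{\pi}{k+1}$, there is a partition of $V(X)$ into $2k+2$ (possibly empty) parts $V_0,V_\theta,V_{2\theta},\dots,V_{(2k+1)\theta}$ (subscripts read modulo $2\pi$) such that $X$ has one of the following structures: (A) For each $m\in\{0,1,\dots,2k+1\}$ the digraph induced by $V_{m\theta}$ contains only digons, and for each directed edge $\overrightarrow{e_{st}}$ of $X$ (not part of a digon), if $v_s\in V_{p\theta}$ for some $p\in\{0,\dots,2k+1\}$ then $v_t\in V_{(p+1)\theta\ (\mathrm{mod}\ 2\pi)}$. (B) For every digon $\{v_s,v_t\}$ of $X$, if $v_s\in V_{m\theta}$ then $v_t\in V_{(\pi+m\theta)\ (\mathrm{mod}\ 2\pi)}$ (in particular each $V_{m\theta}$ is an independent set), and for every directed edge $\overrightarrow{e_{st}}$ of $X$ (not part of a digon), if $v_s\in V_{m\theta}$ then $v_t\in V_{(\pi+(1+m)\theta)\ (\mathrm{mod}\ 2\pi)}$.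
   Context: A digraph $X$ has vertex set $\{v_1,\dots,v_n\}$ and a set of directed edges $\overrightarrow{e_{st}}$ (no loops); a pair $\{v_s,v_t\}$ with both $\overrightarrow{e_{st}}$ and $\overrightarrow{e_{ts}}$ in $X$ is a digon. The underlying graph $\Gamma(X)$ is the simple graph with $v_s\sim v_t$ iff at least one of $\overrightarrow{e_{st}},\overrightarrow{e_{ts}}$ is in $X$; $X$ is weakly connected if $\Gamma(X)$ is connected. For $k\in\mathbb{N}$, the $k$-generalized Hermitian adjacency matrix $H_k(X)$ has $(s,t)$ entry $1$ if both $\overrightarrow{e_{st}},\overrightarrow{e_{ts}}\in E(X)$; $e^{i\pi/(k+1)}$ if $\overrightarrow{e_{st}}\in E(X)$ and $\overrightarrow{e_{ts}}\notin E(X)$; $e^{-i\pi/(k+1)}$ if $\overrightarrow{e_{st}}\notin E(X)$ and $\overrightarrow{e_{ts}}\in E(X)$; and $0$ otherwise. $\rho$ is the spectral radius. *)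

From mathcomp Require Import all_boot all_order all_algebra.
From mathcomp Require Import reals trigo.
From mathcomp Require Export complex.
Import GRing.Theory Num.Theory.

Set Implicit Arguments.
Unset Strict Implicit.
Unset Printing Implicit Defensive.

Local Open Scope ring_scope.
Local Open Scope complex_scope.

(** A digraph on the vertex set 'I_n = {v_0,...,v_(n-1)} is given by its
    arc relation E : rel 'I_n ; E s t means the directed edge e_st is in X.
    "No loops" is the hypothesis [irreflexive E]. *)

Definition und_adj (n : nat) (E : rel 'I_n) : rel 'I_n :=
  fun s t => (s != t) && (E s t || E t s).

Definition und_deg (n : nat) (E : rel 'I_n) (s : 'I_n) : nat :=
  #|[set t | und_adj E s t]|.

Definition max_deg (n : nat) (E : rel 'I_n) : nat :=
  (\max_(s : 'I_n) und_deg E s)%N.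

Definition weakly_connected (n : nat) (E : rel 'I_n) : Prop :=
  forall s t : 'I_n, connect (und_adj E) s t.

Definition und_regular (n : nat) (E : rel 'I_n) (d : nat) : Prop :=
  forall s : 'I_n, und_deg E s = d.

Definition expi (R : realType) (x : R) : R[i] := cos x +i* sin x.

Definition Hk (R : realType) (k n : nat) (E : rel 'I_n) : 'M[R[i]]_n :=
  \matrix_(s < n, t < n)
    if E s t && E t s then 1
    else if E s t then expi (pi / k.+1%:R)
    else if E t s then expi (- (pi / k.+1%:R))
    else 0.

Definition spectrum (R : realType) (n : nat) (A : 'M[R[i]]_n) : seq R[i] :=
  sval (closed_field_poly_normal (char_poly A)).

(** Spectral radius: the largest modulus of an eigenvalue (0 if n = 0). *)
Definition spectral_radius (R : realType) (n : nat) (A : 'M[R[i]]_n) : R :=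
  \big[Num.max/0]_(z <- spectrum A) Normc.normc z.

(** Structure (A) for a labelling f : V -> 'I_(2k+2), where vertex v lies in
    V_{(f v) theta}, theta = pi/(k+1); indices are read modulo 2k+2
    (i.e. angles modulo 2 pi). *)
Definition structureA (k n : nat) (E : rel 'I_n) (f : 'I_n -> 'I_(2 * k.+1)) : Prop :=
  (forall s t, E s t -> E t s -> f s = f t) /\
  (forall s t, E s t -> f s = f t -> E t s) /\
  (forall s t, E s t -> ~~ E t s -> (f t : nat) = ((f s + 1) %% (2 * k.+1))%N).

(** Structure (B). Note pi = (k+1) theta. *)
Definition structureB (k n : nat) (E : rel 'I_n) (f : 'I_n -> 'I_(2 * k.+1)) : Prop :=
  (forall s t, E s t -> E t s -> (f t : nat) = ((f s + k.+1) %% (2 * k.+1))%N) /\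
  (forall s t, E s t -> ~~ E t s ->
     (f t : nat) = ((f s + k.+1 + 1) %% (2 * k.+1))%N).

Arguments Hk R k {n} E.
Arguments structureA k {n} E f.
Arguments structureB k {n} E f.

From mathcomp Require Import all_boot all_order all_algebra.
From mathcomp Require Import reals trigo.
From mathcomp Require Import complex.
From mathcomp Require Import ring zify.
Import Order.TTheory GRing.Theory Num.Theory.

Set Implicit Arguments.
Unset Strict Implicit.
Unset Printing Implicit Defensive.

Local Open Scope ring_scope.
Local Open Scope complex_scope.

(* Let v be an eigenvector of H = H_k(X) for the eigenvalue a, and t a vertex
   where |v_t| is maximal.  Since the nonzero entries of H have modulus 1,
   |a| |v_t| = |sum_s v_s H_st| <= deg(t) |v_t| <= Delta |v_t|.  If |a| = Delta,
   equality holds throughout: deg(t) = Delta and v_s H_st = (a/Delta) v_t for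
   every neighbour s of t, so |v_s| is maximal too, and weak connectivity
   spreads this to the whole graph.  Composing the relation along an edge and
   back, using H_st H_ts = 1, gives u := a/Delta = 1 or -1.  Then the ratios
   v_s / v_t0 are (2k+2)-th roots of unity, i.e. powers omega^(f s) of
   omega = e^(i theta), and the exponents f label the partition: u = 1 is
   structure (A), u = -1 is structure (B).  Conversely, for such a labelling
   the vector (omega^(f s))_s is an eigenvector for the eigenvalue u Delta. *)

Lemma dvdn_double_le (d j : nat) :
  (d %| 2 * j.+1)%N -> d != (2 * j.+1)%N -> (d <= j.+1)%N.
Proof. by move=> /dvdnP [[|[|q]] Hq] /eqP; lia. Qed.

Section Expi.
Variable R : realType.

Lemma normcE (z : R[i]) : `|z| = (Normc.normc z)%:C.
Proof. by []. Qed.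

Lemma expiD (x y : R) : expi x * expi y = expi (x + y).
Proof. by rewrite /expi /= cosD sinD; congr (_ +i* _); ring. Qed.

Lemma expi0 : expi (0 : R) = 1.
Proof. by rewrite /expi cos0 sin0. Qed.

Lemma norm_expi (x : R) : `|expi x| = 1.
Proof. by rewrite normc_def /= cos2Dsin2 sqrtr1. Qed.

Lemma expiX (x : R) m : expi x ^+ m = expi (x *+ m).
Proof.
elim: m => [|m IHm]; first by rewrite expr0 mulr0n expi0.
by rewrite exprS IHm expiD mulrS.
Qed.

Lemma expi_pi : expi (pi : R) = -1.
Proof. by rewrite /expi cospi sinpi; apply/eqP; rewrite eq_complex /= oppr0 !eqxx. Qed.

Definition omega (k : nat) : R[i] := expi (pi / k.+1%:R).

Lemma omega_half k : omega k ^+ k.+1 = -1.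
Proof. by rewrite /omega expiX -[(pi / _) *+ _]mulr_natr divfK ?expi_pi ?pnatr_eq0. Qed.

Lemma omega_neq0 k : omega k != 0.
Proof. by rewrite -normr_eq0 norm_expi oner_eq0. Qed.

(* The order m of omega divides 2k+2.  A proper divisor satisfies m <= k+1,
   but omega^(k+1) = -1, and for 0 < m < k+1, Im (omega^m) = sin (m theta) > 0. *)
Lemma omega_prim k : (2 * k.+1).-primitive_root (omega k).
Proof.
have omegaN : omega k ^+ (2 * k.+1) = 1.
  by rewrite mulnC exprM omega_half expr2 mulrNN mulr1.
have [m prim_m m_dvd] := prim_order_exists (isT : (0 < 2 * k.+1)%N) omegaN.
have [<- //|m_neq] := eqVneq m (2 * k.+1)%N.
have m_gt0 := prim_order_gt0 prim_m.
have omegam := prim_expr_order prim_m.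
have := dvdn_double_le m_dvd m_neq; rewrite leq_eqVlt => /orP [/eqP mk|mk].
  move: omegam; rewrite mk omega_half => /eqP.
  by rewrite -subr_eq0 -opprD oppr_eq0 -mulr2n pnatr_eq0.
have angle : 0 < (pi : R) / k.+1%:R *+ m < pi.
  rewrite -[(pi / _) *+ _]mulr_natr mulr_gt0 ?ltr0n ?divr_gt0 ?pi_gt0 ?ltr0n //=.
  rewrite -[X in _ < X](@divfK _ k.+1%:R) ?pnatr_eq0 //.
  by rewrite ltr_pM2l ?ltr_nat // divr_gt0 ?pi_gt0 ?ltr0n.
move: omegam; rewrite /omega expiX => /(congr1 (@complex.Im R)) /= sin0.
by have := sin_gt0_pi angle; rewrite sin0 ltxx.
Qed.

Lemma expi_opp_omega k : expi (- (pi / k.+1%:R)) = omega k ^+ (2 * k.+1).-1.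
Proof.
apply: (mulIf (omega_neq0 k)).
by rewrite -exprSr prednK // (prim_expr_order (omega_prim k)) expiD addNr expi0.
Qed.

End Expi.

Section Spectrum.
Variables (R : realType) (n : nat).

Lemma mem_spectrum (A : 'M[R[i]]_n) z : (z \in spectrum A) = eigenvalue A z.
Proof.
rewrite eigenvalue_root_char /spectrum; case: closed_field_poly_normal => r /= ->.
by rewrite (monicP (char_poly_monic A)) scale1r root_prod_XsubC.
Qed.

Lemma spectral_radius_ge0 (A : 'M[R[i]]_n) : 0 <= spectral_radius A.
Proof. exact: bigmax_ge_id. Qed.

Lemma spectral_radius_le (A : 'M[R[i]]_n) (c : R) :
  0 <= c -> (forall z, eigenvalue A z -> `|z| <= c%:C) -> spectral_radius A <= c.
Proof.
move=> c_ge0 bound; rewrite /spectral_radius big_seq; apply: bigmax_le => // z.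
by rewrite mem_spectrum -lecR -normcE => /bound.
Qed.

Lemma eigenvalue_le_spectral_radius (A : 'M[R[i]]_n) z :
  eigenvalue A z -> Normc.normc z <= spectral_radius A.
Proof. by rewrite -mem_spectrum => zA; apply: le_bigmax_seq. Qed.

Lemma spectral_radius_attained (A : 'M[R[i]]_n) :
  0 < spectral_radius A ->
  exists2 z, eigenvalue A z & Normc.normc z = spectral_radius A.
Proof.
move=> rho_gt0.
suff [z zA <-] : exists2 z, z \in spectrum A & Normc.normc z = spectral_radius A.
  by exists z; rewrite -?mem_spectrum.
move: rho_gt0; rewrite /spectral_radius.
elim: (spectrum A) => [|z r IHr]; first by rewrite big_nil ltxx.
rewrite big_cons /Num.max; case: ifPn => _; last by exists z; rewrite ?inE ?eqxx.
by move=> /IHr [y yr <-]; exists y; rewrite // inE yr orbT.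
Qed.

Lemma row_max_norm (v : 'rV[R[i]]_n) :
  v != 0 -> exists t, 0 < `|v 0 t| /\ forall s, `|v 0 s| <= `|v 0 t|.
Proof.
move=> v_neq0; have [t0 vt0] : exists t0, v 0 t0 != 0.
  apply/existsP; apply: contraNT v_neq0 => /existsPn v0.
  by apply/eqP/matrixP => i j; rewrite ord1 mxE; apply/eqP/negbNE/v0.
have [t _ t_max] := @arg_maxP _ _ _ t0 xpredT (fun s => Normc.normc (v 0 s)) isT.
have max_t s : `|v 0 s| <= `|v 0 t| by rewrite !normcE lecR; apply: t_max.
by exists t; split; rewrite // (lt_le_trans _ (max_t t0)) ?normr_gt0.
Qed.

End Spectrum.

Section HermitianAdjacency.
Variables (R : realType) (k n : nat) (E : rel 'I_n).
Hypothesis irrE : irreflexive E.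

Local Notation H := (Hk R k E).
Local Notation N := (2 * k.+1)%N.
Local Notation w := (omega R k).
Local Notation D := (max_deg E).

Lemma und_adj_sym s t : und_adj E s t = und_adj E t s.
Proof. by rewrite /und_adj eq_sym orbC. Qed.

Lemma und_adj_arc s t : E s t -> und_adj E s t.
Proof.
by move=> Est; rewrite /und_adj Est andbT; apply: contraTneq Est => ->; rewrite irrE.
Qed.

Lemma Hk_digon s t : E s t -> E t s -> H s t = 1.
Proof. by move=> Est Ets; rewrite mxE Est Ets. Qed.

Lemma Hk_arc s t : E s t -> ~~ E t s -> H s t = w.
Proof. by move=> Est /negbTE Ets; rewrite mxE Est Ets. Qed.

Lemma Hk_arc_rev s t : ~~ E s t -> E t s -> H s t = w ^+ N.-1.
Proof. by move=> /negbTE Est Ets; rewrite mxE Est Ets expi_opp_omega. Qed.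

Lemma Hk_nonadj s t : ~~ und_adj E s t -> H s t = 0.
Proof.
rewrite /und_adj mxE negb_and negbK => /orP [/eqP ->|]; first by rewrite irrE.
by rewrite negb_or => /andP [/negbTE -> /negbTE ->].
Qed.

Lemma Hk_norm s t : und_adj E s t -> `|H s t| = 1.
Proof.
rewrite /und_adj mxE => /andP [_].
by case: (E s t); case: (E t s) => //= _; rewrite ?normr1 ?norm_expi.
Qed.

Lemma Hk_mul_sym s t : und_adj E s t -> H s t * H t s = 1.
Proof.
rewrite /und_adj !mxE => /andP [_].
by case: (E s t); case: (E t s) => //= _; rewrite ?mulr1 // expiD ?addrN ?addNr expi0.
Qed.

Lemma Hk_root s t : und_adj E s t -> H s t ^+ N = 1.
Proof.
have wN : w ^+ N = 1 := prim_expr_order (omega_prim R k).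
rewrite /und_adj => /andP [_].
case Est: (E s t); case Ets: (E t s) => //= _.
- by rewrite Hk_digon // expr1n.
- by rewrite Hk_arc ?Ets.
- by rewrite Hk_arc_rev ?Est // -exprM mulnC exprM wN expr1n.
Qed.

Lemma sum_und_adj (c : R[i]) t :
  \sum_s (if und_adj E s t then c else 0) = c *+ und_deg E t.
Proof.
rewrite -big_mkcond sumr_const /und_deg; congr (_ *+ _).
by apply: eq_card => s; rewrite !inE und_adj_sym.
Qed.

Lemma und_deg_le_max t : (und_deg E t <= D)%N.
Proof. exact: (leq_bigmax t). Qed.

Lemma eigen_entry (v : 'rV_n) a t :
  v *m H = a *: v -> a * v 0 t = \sum_s v 0 s * H s t.
Proof. by move/(congr1 (fun M : 'rV_n => M 0 t)); rewrite !mxE => <-. Qed.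

Lemma eigenvalue_norm_le a : eigenvalue H a -> `|a| <= D%:R.
Proof.
move=> /eigenvalueP [v va /row_max_norm [t [vt_gt0 t_max]]].
rewrite -(ler_pM2r vt_gt0) -normrM eigen_entry //.
apply: le_trans (ler_norm_sum _ _ _) _.
apply: (@le_trans _ _ (\sum_s (if und_adj E s t then `|v 0 t| else 0))).
  apply: ler_sum => s _; case: ifPn => st; last by rewrite Hk_nonadj // mulr0 normr0.
  by rewrite normrM Hk_norm // mulr1.
by rewrite sum_und_adj -[_ *+ und_deg E t]mulr_natl ler_pM2r // ler_nat und_deg_le_max.
Qed.

Lemma spectral_radius_le_max_deg : spectral_radius H <= D%:R.
Proof.
apply: spectral_radius_le => // z /eigenvalue_norm_le.
by rewrite -(rmorph_nat (@real_complex R)).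
Qed.

Definition balanced (u : R[i]) (x : 'I_n -> R[i]) :=
  forall s t, und_adj E s t -> x s * H s t = u * x t.

Lemma balanced_eigenvector u x : und_regular E D -> balanced u x ->
  (\row_s x s) *m H = (u * D%:R) *: \row_s x s.
Proof.
move=> reg bal; apply/matrixP => i t; rewrite !mxE.
rewrite (eq_bigr (fun s => if und_adj E s t then u * x t else 0)).
  by rewrite sum_und_adj reg -mulrnAr -mulr_natl mulrA.
by move=> s _; rewrite mxE; case: ifPn => st; [exact: bal | rewrite Hk_nonadj // mulr0].
Qed.

(* The equality case of the triangle inequality in a v_t = sum_s v_s H_st. *)
Lemma extremal_entry_balanced (v : 'rV_n) a t :
  v *m H = a *: v -> (forall s, `|v 0 s| <= `|v 0 t|) -> 0 < `|v 0 t| ->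
  `|a| = D%:R -> (0 < D)%N ->
  und_deg E t = D /\ forall s, und_adj E s t -> v 0 s * H s t = a / D%:R * v 0 t.
Proof.
move=> va t_max vt_gt0 a_norm D_gt0.
have D_neq0 : (D%:R : R[i]) != 0 by rewrite pnatr_eq0 -lt0n.
set u := a / D%:R.
have u_norm : `|u| = 1 by rewrite normrM normfV a_norm normr_nat divff.
have uvt_neq0 : u * v 0 t != 0.
  by rewrite mulf_neq0 // -normr_gt0 // u_norm ltr01.
pose F s := v 0 s * H s t / (u * v 0 t).
pose G s : R[i] := if und_adj E s t then 1 else 0.
have sumF : \sum_s F s = D%:R.
  rewrite -mulr_suml -(eigen_entry _ va); apply: (canLR (mulfK uvt_neq0)).
  by rewrite /u mulrA [D%:R * _]mulrC divfK.
have FG s : xpredT s -> `|F s| <= G s.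
  rewrite /F /G; case: ifPn => st _; last by rewrite Hk_nonadj // mulr0 mul0r normr0.
  rewrite normrM normfV normrM Hk_norm // mulr1 normrM u_norm mul1r.
  by rewrite ler_pdivrMr // mul1r.
have sumG : \sum_s G s = (und_deg E t)%:R by rewrite sum_und_adj.
have deg_t : und_deg E t = D.
  apply/eqP; rewrite eqn_leq und_deg_le_max -(ler_nat R[i]) -sumG.
  rewrite -(normr_nat _ D) -sumF; apply: le_trans (ler_norm_sum _ _ _) _.
  exact: ler_sum.
have sumFG : \sum_s F s = \sum_s G s by rewrite sumF sumG deg_t.
split=> // s st; have /(_ s isT) := normC_sum_upper FG sumFG.
by rewrite /F /G st => /(canRL (divfK uvt_neq0)); rewrite mul1r.
Qed.

Lemma extremal_eigenvector_balanced (v : 'rV_n) a :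
  weakly_connected E -> v *m H = a *: v -> v != 0 -> `|a| = D%:R -> (0 < D)%N ->
  [/\ und_regular E D, forall s, v 0 s != 0 & balanced (a / D%:R) (v 0)].
Proof.
move=> conn va v_neq0 a_norm D_gt0.
have [t0 [vt0_gt0 t0_max]] := row_max_norm v_neq0.
set M := `|v 0 t0|.
have extremal t : `|v 0 t| = M ->
    und_deg E t = D /\ forall s, und_adj E s t -> v 0 s * H s t = a / D%:R * v 0 t.
  by move=> vt; apply: (extremal_entry_balanced va); rewrite ?vt.
have a_D_norm : `|a / D%:R| = 1.
  by rewrite normrM normfV a_norm normr_nat divff // pnatr_eq0 -lt0n.
have spread s t : und_adj E s t -> `|v 0 t| = M -> `|v 0 s| = M.
  move=> st vt; have [_ /(_ s st)/(congr1 Num.norm)] := extremal t vt.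
  by rewrite normrM Hk_norm // mulr1 normrM a_D_norm mul1r vt.
have all_max s : `|v 0 s| = M.
  have closedM : closed (und_adj E) [pred s | `|v 0 s| == M].
    move=> x y xy; rewrite !inE; apply/eqP/eqP; last exact: spread.
    by apply: spread; rewrite und_adj_sym.
  by have := closed_connect closedM (conn t0 s); rewrite !inE eqxx => /esym/eqP.
split=> [s|s|s t st].
- by have [] := extremal s (all_max s).
- by rewrite -normr_gt0 all_max.
- by have [_] := extremal t (all_max t); apply.
Qed.

Lemma balanced_sign u x s t :
  (forall s, x s != 0) -> und_adj E s t -> balanced u x -> u ^+ 2 = 1.
Proof.
move=> x_neq0 st bal; apply: (mulIf (mulf_neq0 (x_neq0 s) (x_neq0 t))).
rewrite mul1r -[RHS]mulr1 -(Hk_mul_sym st) [RHS]mulrACA bal // (bal t s) 1?und_adj_sym //.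
by rewrite [RHS]mulrACA -expr2 [x t * _]mulrC.
Qed.

(* Along an edge the ratio x t / x s is u^-1 H s t, a (2k+2)-th root of unity,
   so by connectivity every x s / x t0 is a power of the primitive root w. *)
Lemma balanced_roots u x (t0 : 'I_n) :
  weakly_connected E -> (forall s, x s != 0) -> u ^+ N = 1 -> balanced u x ->
  exists f : 'I_n -> 'I_N, balanced u (fun s => w ^+ f s).
Proof.
move=> conn x_neq0 uN bal.
pose y s := x s / x t0.
have baly : balanced u y by move=> s t st; rewrite /y mulrAC bal // mulrA.
have root_step s t : und_adj E s t -> y s ^+ N = 1 -> y t ^+ N = 1.
  move=> st ysN; have := congr1 (fun z => z ^+ N) (baly s t st).
  by rewrite exprMn [RHS]exprMn ysN Hk_root // uN !mul1r.
have roots s : y s ^+ N = 1.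
  have closedN : closed (und_adj E) [pred s | y s ^+ N == 1].
    move=> a b ab; rewrite !inE; apply/eqP/eqP; first exact: root_step.
    by apply: root_step; rewrite und_adj_sym.
  have := closed_connect closedN (conn t0 s).
  by rewrite !inE /y divff // expr1n eqxx => /esym/eqP.
pose f s := sval (prim_rootP (omega_prim R k) (roots s)).
have yf s : y s = w ^+ f s := svalP (prim_rootP (omega_prim R k) (roots s)).
by exists f => s t st; rewrite -!yf baly.
Qed.

Lemma omega_expr_inj a b : w ^+ a = w ^+ b -> a = b %[mod N].
Proof. by move/eqP; rewrite (eq_prim_root_expr (omega_prim R k)) => /eqP. Qed.

Lemma structureA_balanced (f : 'I_n -> 'I_N) :
  structureA k E f <-> balanced 1 (fun s => w ^+ f s).
Proof.
have w_prim := omega_prim R k.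
split=> [[digon [inside arc]] s t|bal].
  rewrite /und_adj mul1r => /andP [_].
  case Est: (E s t); case Ets: (E t s) => // _.
  - by rewrite Hk_digon // mulr1 (digon s t).
  - by rewrite Hk_arc ?Ets // (arc s t) ?Ets // (prim_expr_mod w_prim) addn1 exprSr.
  rewrite Hk_arc_rev ?Est // (arc t s) ?Est // (prim_expr_mod w_prim) -exprD.
  by rewrite addn1 addSn -addnS prednK // exprD (prim_expr_order w_prim) mulr1.
have arc_step s t : E s t -> ~~ E t s -> (f s).+1 = f t %[mod N].
  move=> Est Ets; have /= := bal s t (und_adj_arc Est).
  by rewrite Hk_arc // mul1r -exprSr => /omega_expr_inj.
split; [|split].
- move=> s t Est Ets; have /= := bal s t (und_adj_arc Est).
  by rewrite Hk_digon // mulr1 mul1r => /omega_expr_inj; rewrite !modn_small // => /val_inj.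
- move=> s t Est fst; apply/negPn/negP => /(arc_step _ _ Est); rewrite fst.
  have ltN := ltn_ord (f t); lia.
- move=> s t Est /(arc_step _ _ Est).
  by rewrite addn1 (modn_small (ltn_ord (f t))) => ->.
Qed.

Lemma structureB_balanced (f : 'I_n -> 'I_N) :
  structureB k E f <-> balanced (-1) (fun s => w ^+ f s).
Proof.
have w_prim := omega_prim R k.
have w_half : w ^+ k.+1 = -1 := omega_half R k.
split=> [[digon arc] s t|bal].
  rewrite /und_adj mulN1r => /andP [_].
  case Est: (E s t); case Ets: (E t s) => // _.
  - rewrite Hk_digon // mulr1 (digon s t) // (prim_expr_mod w_prim).
    by rewrite exprD w_half mulrN1 opprK.
  - rewrite Hk_arc ?Ets // (arc s t) ?Ets // (prim_expr_mod w_prim).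
    by rewrite !exprD w_half expr1 mulrN1 mulNr opprK.
  rewrite Hk_arc_rev ?Est // (arc t s) ?Est // (prim_expr_mod w_prim) -!exprD.
  rewrite -addnA add1n prednK // exprD (prim_expr_order w_prim) mulr1.
  by rewrite exprD w_half mulrN1.
split=> s t Est Ets; rewrite -(modn_small (ltn_ord (f t))); apply: omega_expr_inj;
  have w_ft : w ^+ f t = - (w ^+ f s * H s t) by rewrite bal ?und_adj_arc // mulN1r opprK.
- by rewrite w_ft Hk_digon // mulr1 exprD w_half mulrN1.
- by rewrite w_ft Hk_arc // !exprD w_half expr1 mulrN1 mulNr.
Qed.

Lemma max_deg0_nonadj s t : D = 0%N -> ~~ und_adj E s t.
Proof.
move=> D0; apply/negP => st; have := und_deg_le_max t.
by rewrite D0 leqn0 /und_deg cards_eq0 => /eqP/setP/(_ s); rewrite !inE und_adj_sym st.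
Qed.

Lemma rho_max_deg_structure : weakly_connected E -> spectral_radius H = D%:R ->
  und_regular E D /\ exists f : 'I_n -> 'I_N, structureA k E f \/ structureB k E f.
Proof.
move=> conn rho; have [D0|D_gt0] := posnP D.
  split=> [s|]; first by apply/eqP; rewrite eqn_leq und_deg_le_max D0.
  have N_gt0 : (0 < N)%N by [].
  exists (fun _ => Ordinal N_gt0); left; apply/structureA_balanced => s t.
  by rewrite (negbTE (max_deg0_nonadj s t D0)).
have [z zH z_norm] : exists2 z, eigenvalue H z & Normc.normc z = spectral_radius H.
  by apply: spectral_radius_attained; rewrite rho ltr0n.
have [v vz v_neq0] := eigenvalueP zH.
have z_D : `|z| = D%:R by rewrite normcE z_norm rho rmorph_nat.
have [reg v0_neq0 bal] := extremal_eigenvector_balanced conn vz v_neq0 z_D D_gt0.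
have [t0 _] := row_max_norm v_neq0.
have [s0 t0s0] : exists s0, und_adj E t0 s0.
  have : (0 < und_deg E t0)%N by rewrite reg.
  by rewrite card_gt0 => /set0Pn [s0]; rewrite inE; exists s0.
have u2 := balanced_sign v0_neq0 t0s0 bal.
have uN : (z / D%:R) ^+ N = 1 by rewrite exprM u2 expr1n.
have [f balf] := balanced_roots t0 conn v0_neq0 uN bal.
split=> //; exists f.
move/eqP: u2; rewrite sqrf_eq1 => /orP [] /eqP u_sign.
  by left; apply/structureA_balanced; rewrite -u_sign.
by right; apply/structureB_balanced; rewrite -u_sign.
Qed.

Lemma structure_rho_max_deg : und_regular E D ->
  (exists f : 'I_n -> 'I_N, structureA k E f \/ structureB k E f) ->
  spectral_radius H = D%:R.
Proof.
move=> reg [f Af_Bf]; apply/le_anti; rewrite spectral_radius_le_max_deg /=.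
have [u [u_norm bal]] : exists u : R[i], `|u| = 1 /\ balanced u (fun s => w ^+ f s).
  case: Af_Bf => [/structureA_balanced|/structureB_balanced] bal.
    by exists 1; rewrite normr1.
  by exists (-1); rewrite normrN normr1.
case: (pickP (fun _ : 'I_n => true)) => [s0 _|no_vertex]; last first.
  by rewrite /max_deg big_pred0 ?spectral_radius_ge0 // => s; apply: no_vertex.
have v_neq0 : \row_s w ^+ f s != 0.
  apply/eqP => /matrixP /(_ 0 s0) /eqP.
  by rewrite !mxE (negbTE (expf_neq0 _ (omega_neq0 R k))).
have /eigenvalue_le_spectral_radius : eigenvalue H (u * D%:R).
  by apply/eigenvalueP; exists (\row_s w ^+ f s); first exact: balanced_eigenvector.
suff -> : Normc.normc (u * D%:R) = D%:R by [].
by apply: complexI; rewrite -normcE normrM u_norm mul1r normr_nat rmorph_nat.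
Qed.

End HermitianAdjacency.

Local Close Scope complex_scope.

Theorem theorem5p5 (R : realType) (n : nat) (E : rel 'I_n) :
  irreflexive E ->
  (forall k : nat, spectral_radius (Hk R k E) <= (max_deg E)%:R) /\
  (weakly_connected E ->
   forall k : nat,
     spectral_radius (Hk R k E) = (max_deg E)%:R <->
     und_regular E (max_deg E) /\
     exists f : 'I_n -> 'I_(2 * k.+1),
       structureA k E f \/ structureB k E f).
Proof.
move=> irrE; split=> [k|conn k]; first exact: (@spectral_radius_le_max_deg R k n E irrE).
split; first exact: (@rho_max_deg_structure R k n E irrE conn).
by case; exact: (@structure_rho_max_deg R k n E irrE).
Qed.
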